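(* Let $\phi$ be a reduced Boolean formula in the variables $x_1,\dots,x_n$ defining a set $S \subseteq \{0,1\}^n$ and let $Q \subseteq [0,1]^n$ be any convex set containing $S$. Then $\phi^n(Q) = \operatorname{conv}(S)$.
   Context: Boolean formulas are built from input variables $x_1,\dots,x_n$ using $\wedge$, $\vee$, $\neg$, interpreted as functions $\{0,1\}^n\to\{0,1\}$; $\phi$ defines $S=\{x\in\{0,1\}^n:\phi(x)=1\}$. A formula is reduced if negations apply only to input variables. For a reduced $\phi$ and convex $Q\subseteq[0,1]^n$, $\phi(Q)$ is defined recursively: $x_i$ is replaced by $\{x \in Q : x_i = 1\}$; $\neg x_i$ by $\{x \in Q : x_i = 0\}$; a conjunction by the intersection of the corresponding sets; a disjunction by the convex hull of the union of the corresponding sets. Iterates: $\phi^1(Q):=\phi(Q)$ and $\phi^{\ell+1}(Q):=\phi(\phi^\ell(Q))$ for $\ell\ge1$. *)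

From HB Require Import structures.
From mathcomp Require Import all_boot all_order all_algebra.
From mathcomp Require Import boolp classical_sets reals convex.
Set Implicit Arguments. Unset Strict Implicit. Unset Printing Implicit Defensive.
Import Order.TTheory GRing.Theory Num.Theory.
Local Open Scope classical_set_scope.
Local Open Scope ring_scope.

(* Reduced Boolean formulas in the variables x_0, ..., x_{n-1}:
   negations only on variables. *)
Inductive rformula (n : nat) : Type :=
| RVar of 'I_n
| RNVar of 'I_n
| RAnd of rformula n & rformula n
| ROr of rformula n & rformula n.

Fixpoint reval n (phi : rformula n) (b : 'I_n -> bool) : bool :=
  match phi with
  | RVar i => b i
  | RNVar i => ~~ b i
  | RAnd p q => reval p b && reval q b
  | ROr p q => reval p b || reval q b
  end.

Definition rdefset (R : realType) n (phi : rformula n) : set 'rV[R]_n :=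
  [set x | exists b : 'I_n -> bool, x = \row_i (b i)%:R /\ reval phi b].

Definition convexR (R : realType) n (A : set 'rV[R]_n) : Prop :=
  convex_set (A : set (convex_lmodType 'rV[R]_n)).

Definition conv_hull (R : realType) n (A : set 'rV[R]_n) : set 'rV[R]_n :=
  [set x | forall B : set 'rV[R]_n, convexR B -> A `<=` B -> B x].

Definition unit_cube (R : realType) n : set 'rV[R]_n :=
  [set x | forall i, 0 <= x ord0 i <= 1].

Fixpoint rapply (R : realType) n (phi : rformula n) (Q : set 'rV[R]_n)
  : set 'rV[R]_n :=
  match phi with
  | RVar i => [set x | Q x /\ x ord0 i = 1]
  | RNVar i => [set x | Q x /\ x ord0 i = 0]
  | RAnd p q => rapply p Q `&` rapply q Q
  | ROr p q => conv_hull (rapply p Q `|` rapply q Q)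
  end.

Definition riter (R : realType) n (phi : rformula n) (l : nat)
  (Q : set 'rV[R]_n) : set 'rV[R]_n := iter l (rapply phi) Q.

(* Each map phi(.) sends convex sets to convex subsets, keeps the points of S,
   and commutes with cutting by a hyperplane x_i = 0 or x_i = 1: such a
   hyperplane supports the cube, so conv(A) meets it in conv(A /\ {x_i = c})
   for every A inside the cube.
   By induction on d >= 1, phi^d maps every convex subset L of a d-dimensional
   face F of the cube into conv(S /\ F). On an edge F one application suffices:
   phi(L) is spanned by the endpoints of F at which phi holds. For d > 1 write
   phi^d(L) = phi(N) with N = phi^(d-1)(L). If phi holds at every vertex of F
   then conv(S /\ F) = F. Otherwise phi(N) lies in the convex hull of the
   points of N on the facets G of F, and such a point lies in
   phi^(d-1)(L /\ G), which is contained in conv(S /\ G) by induction.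
   For F = [0,1]^n this gives phi^n(Q) <= conv(S); conversely phi^n(Q) is
   convex and contains S. *)

From HB Require Import structures.
From mathcomp Require Import all_boot all_order all_algebra.
From mathcomp Require Import boolp classical_sets reals convex.
From mathcomp Require Import ring lra interval_inference.
Set Implicit Arguments. Unset Strict Implicit. Unset Printing Implicit Defensive.
Import Order.TTheory GRing.Theory Num.Theory.
Local Open Scope classical_set_scope.
Local Open Scope ring_scope.

Section Relaxation.
Variables (R : realType) (n : nat).
Implicit Types A B : set 'rV[R]_n.
Local Notation cube := (@unit_cube R n).

Lemma convexRP A : convexR A <->
  (forall x y (t : R), 0 <= t <= 1 -> A x -> A y -> A (t *: x + (1 - t) *: y)).
Proof.
split=> [cA x y t /andP[t0 t1] Ax Ay | cA x y p].
  by have := cA x y (Itv01 t0 t1); rewrite !inE; move/(_ Ax Ay).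
by rewrite !inE => Ax Ay; apply: cA => //; apply/andP; split.
Qed.

Lemma convexR_openP A :
  (forall x y (t : R), 0 < t < 1 -> A x -> A y -> A (t *: x + (1 - t) *: y)) ->
  convexR A.
Proof.
move=> cA; apply/convexRP => x y t /andP[t0 t1] Ax Ay.
have [->|tn0] := eqVneq t 0; first by rewrite scale0r add0r subr0 scale1r.
have [->|tn1] := eqVneq t 1; first by rewrite scale1r subrr scale0r addr0.
by apply: cA; rewrite // !lt_neqAle t0 t1 eq_sym tn0 tn1.
Qed.

Lemma convexR_hull A : convexR (conv_hull A).
Proof.
apply/convexRP => x y t t01 Ax Ay B cB AB.
by move/convexRP: (cB); apply=> //; [apply: Ax | apply: Ay].
Qed.

Lemma sub_hull A : A `<=` conv_hull A.
Proof. by move=> x Ax B _; apply. Qed.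

Lemma hull_min A B : convexR B -> A `<=` B -> conv_hull A `<=` B.
Proof. by move=> cB AB x; apply. Qed.

Lemma hull_mono A B : A `<=` B -> conv_hull A `<=` conv_hull B.
Proof.
by move=> AB; apply: hull_min; [exact: convexR_hull | move=> x /AB /sub_hull].
Qed.

Lemma convexRI A B : convexR A -> convexR B -> convexR (A `&` B).
Proof.
move=> /convexRP cA /convexRP cB; apply/convexRP => x y t t01 [Ax Bx] [Ay By].
by split; [apply: cA | apply: cB].
Qed.

Lemma convexR_coord i (c : R) : convexR [set x : 'rV[R]_n | x ord0 i = c].
Proof. by apply/convexRP => x y t _ /= xi yi; rewrite !mxE xi yi; ring. Qed.

Lemma convexR_cube : convexR cube.
Proof.
apply/convexRP => x y t /andP[t0 t1] cx cy i; rewrite !mxE.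
by have /andP[x0 x1] := cx i; have /andP[y0 y1] := cy i; apply/andP; split; nra.
Qed.

Definition hyperplane i (c : bool) : set 'rV[R]_n := [set x | x ord0 i = c%:R].

Lemma cube_coord_extreme x y (t : R) i (c : bool) :
  cube x -> cube y -> 0 < t < 1 ->
  hyperplane i c (t *: x + (1 - t) *: y) -> hyperplane i c x /\ hyperplane i c y.
Proof.
move=> cx cy /andP[t0 t1]; rewrite /hyperplane /= !mxE.
have /andP[x0 x1] := cx i; have /andP[y0 y1] := cy i.
by case: c => /= e; split; nra.
Qed.

(* x_i = 0 and x_i = 1 are supporting hyperplanes of the cube. *)
Lemma hull_hyperplane A i c : A `<=` cube ->
  conv_hull A `&` hyperplane i c `<=` conv_hull (A `&` hyperplane i c).
Proof.
move=> A_cube; have /convexRP cube_cvx := convexR_cube.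
have /convexRP hull_cvx : convexR (conv_hull (A `&` hyperplane i c)).
  exact: convexR_hull.
pose B := [set x | conv_hull (A `&` hyperplane i c) x \/
                   (cube x /\ ~ hyperplane i c x)].
have B_hull x : B x -> hyperplane i c x -> conv_hull (A `&` hyperplane i c) x.
  by case=> [//|[_]].
have B_cube : B `<=` cube.
  move=> x [|[]//]; apply: hull_min; first exact: convexR_cube.
  by move=> y [/A_cube].
suff AB : conv_hull A `<=` B by move=> x [/AB Bx Hx]; apply: B_hull.
apply: hull_min => [|x Ax]; last first.
  have [Hx|Hx] := pselect (hyperplane i c x); first by left; apply: sub_hull.
  by right; split; first apply: A_cube.
apply: convexR_openP => x y t t01 Bx By.
have [Hz|Hz] := pselect (hyperplane i c (t *: x + (1 - t) *: y)); last first.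
  right; split=> //; apply: cube_cvx (B_cube _ Bx) (B_cube _ By).
  by case/andP: t01 => /ltW -> /ltW ->.
have [Hx Hy] := cube_coord_extreme (B_cube _ Bx) (B_cube _ By) t01 Hz.
left; apply: hull_cvx (B_hull _ Bx Hx) (B_hull _ By Hy).
by case/andP: t01 => /ltW -> /ltW ->.
Qed.

Local Notation defset phi := (@rdefset R n phi).
Implicit Types (phi : rformula n) (Q K : set 'rV[R]_n).

Lemma convexR_rapply phi Q : convexR Q -> convexR (rapply phi Q).
Proof.
move=> cQ; elim: phi => [i|i|p ihp q ihq|p _ q _] /=.
- by apply: convexRI cQ _; apply: convexR_coord.
- by apply: convexRI cQ _; apply: convexR_coord.
- exact: convexRI.
- exact: convexR_hull.
Qed.

Lemma rapply_sub phi Q : convexR Q -> rapply phi Q `<=` Q.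
Proof.
move=> cQ; elim: phi => [i|i|p ihp q ihq|p ihp q ihq] /= x.
- by case.
- by case.
- by case=> /ihp.
- by apply: hull_min x => // x [/ihp|/ihq].
Qed.

Lemma rapply_mono phi Q K : Q `<=` K -> rapply phi Q `<=` rapply phi K.
Proof.
move=> QK; elim: phi => [i|i|p ihp q ihq|p ihp q ihq] /=.
- by move=> x [/QK].
- by move=> x [/QK].
- by move=> x [/ihp ? /ihq].
- by apply: hull_mono => x [/ihp|/ihq]; [left|right].
Qed.

Lemma defset_rapply phi Q : defset phi `&` Q `<=` rapply phi Q.
Proof.
elim: phi => [i|i|p ihp q ihq|p ihp q ihq] /= x [[b [-> /= eb]] Qx].
- by split=> //; rewrite mxE eb.
- by split=> //; rewrite mxE (negbTE eb).
- by case/andP: eb => ep eq; split; [apply: ihp | apply: ihq]; split=> //; exists b.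
- apply: sub_hull; case/orP: eb => [ep|eq]; [left; apply: ihp | right; apply: ihq];
    by split=> //; exists b.
Qed.

Lemma rapply_hyperplane phi K i c : convexR K -> K `<=` cube ->
  rapply phi K `&` hyperplane i c `<=` rapply phi (K `&` hyperplane i c).
Proof.
move=> cK K_cube; elim: phi => [j|j|p ihp q ihq|p ihp q ihq] /=.
- by move=> x [[Kx xj] Hx].
- by move=> x [[Kx xj] Hx].
- by move=> x [[px qx] Hx]; split; [apply: ihp | apply: ihq].
- have pq_cube : rapply p K `|` rapply q K `<=` cube.
    by move=> y [] /rapply_sub-/(_ cK) /K_cube.
  move=> x /(hull_hyperplane pq_cube); apply: hull_mono => y [[py|qy] Hy].
  + by left; apply: ihp.
  + by right; apply: ihq.
Qed.

Lemma riterS phi m Q : riter phi m.+1 Q = rapply phi (riter phi m Q).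
Proof. exact: iterS. Qed.

Lemma convexR_riter phi m Q : convexR Q -> convexR (riter phi m Q).
Proof. by move=> cQ; elim: m => [//|m ih]; rewrite riterS; apply: convexR_rapply. Qed.

Lemma riter_sub phi m Q : convexR Q -> riter phi m Q `<=` Q.
Proof.
move=> cQ; elim: m => [//|m ih]; rewrite riterS.
by move=> x /rapply_sub-/(_ (convexR_riter cQ)) /ih.
Qed.

Lemma defset_riter phi m Q : defset phi `<=` Q -> defset phi `<=` riter phi m Q.
Proof.
move=> SQ; elim: m => [//|m ih] x Sx; rewrite riterS.
by apply: defset_rapply; split=> //; apply: ih.
Qed.

Lemma riter_hyperplane phi m K i c : convexR K -> K `<=` cube ->
  riter phi m K `&` hyperplane i c `<=` riter phi m (K `&` hyperplane i c).
Proof.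
move=> cK K_cube; elim: m => [//|m ih] x; rewrite !riterS => Hx.
apply: (rapply_mono ih); apply: rapply_hyperplane Hx.
- exact: convexR_riter.
- by move=> y /riter_sub-/(_ cK) /K_cube.
Qed.

Definition vertex (b : 'I_n -> bool) : 'rV[R]_n := \row_i (b i)%:R.

Definition face (s : 'I_n -> option bool) : set 'rV[R]_n :=
  [set x | cube x /\ forall i c, s i = Some c -> hyperplane i c x].

Definition vertex_of (s : 'I_n -> option bool) (b : 'I_n -> bool) :=
  forall i c, s i = Some c -> b i = c.

Definition face_dim (s : 'I_n -> option bool) := #|[pred i | s i == None]|.

Implicit Types (s : 'I_n -> option bool) (b : 'I_n -> bool).

Lemma face_dim_fix s i c : s i = None ->
  face_dim s = (face_dim [eta s with i |-> Some c]).+1.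
Proof.
move=> si; rewrite /face_dim (cardD1 i) inE si eqxx add1n; congr _.+1.
by apply: eq_card => j; rewrite !inE /=; case: eqVneq.
Qed.

Lemma face_fix s i c : s i = None ->
  face [eta s with i |-> Some c] = face s `&` hyperplane i c.
Proof.
move=> si; apply/seteqP; split=> x /=.
  move=> [x_cube xs]; split; last by apply: xs => /=; rewrite eqxx.
  split=> // j c' sj; apply: xs => /=; case: eqVneq => // eji.
  by move: sj; rewrite eji si.
move=> [[x_cube xs] Hx]; split=> // j c' /=.
by case: eqVneq => [-> [<-] //|_]; apply: xs.
Qed.

Lemma vertex_of_fix s i c b : s i = None ->
  vertex_of [eta s with i |-> Some c] b -> vertex_of s b.
Proof.
move=> si vb j c' sj; apply: vb => /=; case: eqVneq => // eji.
by move: sj; rewrite eji si.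
Qed.

Lemma vertex_face s b : vertex_of s b -> face s (vertex b).
Proof.
move=> vb; split=> [i|i c /vb]; rewrite /hyperplane /= mxE; last by move->.
by case: (b i); rewrite /= ?lexx ?ler01.
Qed.

Lemma convexR_face s : convexR (face s).
Proof.
apply/convexRP => x y t t01 [x_cube xs] [y_cube ys]; split.
  by move/convexRP: convexR_cube; apply.
move=> i c si; have xi := xs i c si; have yi := ys i c si.
by move: xi yi; rewrite /hyperplane /= !mxE => -> ->; ring.
Qed.

Lemma face_sub_convex s B : convexR B ->
  (forall b, vertex_of s b -> B (vertex b)) -> face s `<=` B.
Proof.
move=> /convexRP cB; move: {2}(face_dim s) (erefl (face_dim s)) => k.
elim: k s => [|k ih] s dim_s vB x [x_cube xs].
  have fixed i : exists c, s i = Some c.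
    by case E: (s i) => [c|]; [exists c | have := card0_eq dim_s i; rewrite inE E].
  suff -> : x = vertex (fun i => odflt false (s i)) by apply: vB => i c ->.
  by apply/rowP => i; have [c E] := fixed i; rewrite mxE E /= (xs i c E).
have [i /eqP si|none] := pickP [pred i | s i == None]; last first.
  by move: dim_s; rewrite /face_dim (eq_card0 none).
pose x_at (c : bool) : 'rV[R]_n := \row_j (if j == i then c%:R else x ord0 j).
have x_at_face c : face [eta s with i |-> Some c] (x_at c).
  rewrite face_fix //; split; last by rewrite /hyperplane /= mxE eqxx.
  split=> [j|j c' sj]; rewrite /hyperplane /= mxE.
    by case: eqVneq => _; [case: c; rewrite /= ?lexx ?ler01 | apply: x_cube].
  by case: eqVneq => [eji|_]; [move: sj; rewrite eji si | apply: xs].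
have B_x_at (c : bool) : B (x_at c).
  apply: (ih [eta s with i |-> Some c] _ _ _ (x_at_face c)).
    by apply/eq_add_S; rewrite -face_dim_fix.
  by move=> b /(vertex_of_fix si) /vB.
have -> : x = x ord0 i *: x_at true + (1 - x ord0 i) *: x_at false.
  by apply/rowP => j; rewrite !mxE; case: eqVneq => [->|_] /=; ring.
exact: cB (x_cube i) (B_x_at true) (B_x_at false).
Qed.

Lemma hyperplane_disj i x : hyperplane i true x -> hyperplane i false x -> False.
Proof. by rewrite /hyperplane /= => -> /eqP; rewrite oner_eq0. Qed.

Definition free_facets s : set 'rV[R]_n :=
  [set x | exists i c, s i = None /\ hyperplane i c x].

Lemma rapply_free_facets phi s N : N `<=` face s ->
  rapply phi N `<=` conv_hull (N `&` free_facets s) \/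
  (forall b, vertex_of s b -> reval phi b).
Proof.
move=> N_face; elim: phi => [i|i|p ihp q ihq|p ihp q ihq] /=.
- case E: (s i) => [[]|].
  + by right=> b /(_ i true E) ->.
  + by left=> x [/N_face [_ /(_ i false E) Hx] H'x]; case: (hyperplane_disj H'x Hx).
  + by left=> x [Nx Hx]; apply: sub_hull; split=> //; exists i, true.
- case E: (s i) => [[]|].
  + by left=> x [/N_face [_ /(_ i true E) Hx] H'x]; case: (hyperplane_disj Hx H'x).
  + by right=> b /(_ i false E) ->.
  + by left=> x [Nx Hx]; apply: sub_hull; split=> //; exists i, false.
- case: ihp => [hp|tp]; first by left=> x [/hp].
  case: ihq => [hq|tq]; first by left=> x [_ /hq].
  by right=> b vb; rewrite tp ?tq.
- case: ihp => [hp|tp]; last by right=> b vb; rewrite tp.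
  case: ihq => [hq|tq]; last by right=> b vb; rewrite tq ?orbT.
  by left; apply: hull_min => [|x [/hp|/hq]] //; apply: convexR_hull.
Qed.

Section Segment.
Variables (s : 'I_n -> option bool) (j : 'I_n).
Hypothesis free_j : forall i, s i = None -> i = j.

Let endpoint (c : bool) i := odflt c (s i).

(* The convex hull of the endpoints v_0 (if e0) and v_1 (if e1) of the edge [face s]. *)
Definition segment_part (e0 e1 : bool) : set 'rV[R]_n :=
  [set x | face s x /\ (e0 \/ hyperplane j true x) /\ (e1 \/ hyperplane j false x)].

Lemma convexR_segment_part e0 e1 : convexR (segment_part e0 e1).
Proof.
apply/convexRP => x y t t01 [fx [x0 x1]] [fy [y0 y1]]; split.
  by move/convexRP: (convexR_face (s := s)); apply.
rewrite /hyperplane /= !mxE; split.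
  by case: e0 x0 y0 => [|[//|->] [//|->]]; [left | right => /=; ring].
by case: e1 x1 y1 => [|[//|->] [//|->]]; [left | right => /=; ring].
Qed.

Lemma rapply_segment_part psi L : L `<=` face s ->
  rapply psi L `<=`
  segment_part (reval psi (endpoint false)) (reval psi (endpoint true)).
Proof.
move=> L_face; elim: psi => [i|i|p ihp q ihq|p ihp q ihq] /=.
- move=> x [/L_face fx Hx]; split=> //; rewrite /endpoint.
  case E: (s i) => [c|]; last by move/free_j: E => <-; split; [right|left].
  have := fx.2 i c E; case: c {E} => H'x; first by split; left.
  by case: (hyperplane_disj Hx H'x).
- move=> x [/L_face fx Hx]; split=> //; rewrite /endpoint.
  case E: (s i) => [c|]; last by move/free_j: E => <-; split; [left|right].
  have := fx.2 i c E; case: c {E} => H'x; last by split; left.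
  by case: (hyperplane_disj H'x Hx).
- move=> x [/ihp [fx [p0 p1]] /ihq [_ [q0 q1]]]; split=> //.
  by case: p0 p1 q0 q1 => [->|?] [->|?] [->|?] [->|?]; split; by [left|right].
- apply: hull_min; first exact: convexR_segment_part.
  move=> x [/ihp|/ihq] [fx [h0 h1]]; split=> //;
    by case: h0 h1 => [->|?] [->|?]; split; rewrite ?orbT; by [left|right].
Qed.

Lemma segment_part_hull phi :
  segment_part (reval phi (endpoint false)) (reval phi (endpoint true)) `<=`
  conv_hull (defset phi `&` face s).
Proof.
move=> x [[x_cube xs] [h0 h1]].
have x_comb : x = x ord0 j *: vertex (endpoint true) +
                  (1 - x ord0 j) *: vertex (endpoint false).
  apply/rowP => i; rewrite !mxE /endpoint.
  case E: (s i) => [c|] /=; first by rewrite (xs i c E); ring.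
  by move/free_j: E => ->; ring.
have S_endpoint c : reval phi (endpoint c) ->
    conv_hull (defset phi `&` face s) (vertex (endpoint c)).
  move=> ec; apply: sub_hull; split; first by exists (endpoint c).
  by apply: vertex_face => i c'; rewrite /endpoint => ->.
case: h0 h1 => [e0|Hx1] [e1|Hx0].
- rewrite x_comb; move/convexRP: (convexR_hull (A := defset phi `&` face s)).
  by apply; [exact: x_cube | exact: S_endpoint..].
- by rewrite x_comb Hx0 /= scale0r add0r subr0 scale1r; apply: S_endpoint.
- by rewrite x_comb Hx1 /= scale1r subrr scale0r addr0; apply: S_endpoint.
- by case: (hyperplane_disj Hx1 Hx0).
Qed.

End Segment.

Lemma riter_face_hull phi k s L : face_dim s = k.+1 -> convexR L -> L `<=` face s ->
  riter phi k.+1 L `<=` conv_hull (defset phi `&` face s).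
Proof.
elim: k s L => [|k ih] s L dim_s cL L_face.
  have [j free_j] := mem_card1 dim_s.
  have {}free_j i : s i = None -> i = j.
    by move=> si; apply/eqP; have := free_j i; rewrite !inE si eqxx => <-.
  by move=> x /(rapply_segment_part free_j L_face) /(segment_part_hull free_j).
rewrite riterS; set N := riter phi k.+1 L.
have N_face : N `<=` face s by move=> x /riter_sub-/(_ cL) /L_face.
have [phiN_hull|phi_true] := rapply_free_facets phi N_face.
  move=> x /phiN_hull; apply: hull_min; first exact: convexR_hull.
  move=> y [Ny [i [c [si Hy]]]].
  have L_cube : L `<=` cube by move=> z /L_face [].
  have dim_fix : face_dim [eta s with i |-> Some c] = k.+1.
    by apply/eq_add_S; rewrite -face_dim_fix.
  have LH_face : L `&` hyperplane i c `<=` face [eta s with i |-> Some c].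
    by rewrite face_fix // => z [/L_face].
  have cLH : convexR (L `&` hyperplane i c).
    by apply: convexRI => //; apply: convexR_coord.
  move: (riter_hyperplane cL L_cube (conj Ny Hy)) => /(ih _ _ dim_fix cLH LH_face).
  by apply: hull_mono => z [Sz]; rewrite face_fix // => -[].
move=> x /rapply_sub-/(_ (convexR_riter cL)) /N_face.
apply: face_sub_convex; first exact: convexR_hull.
move=> b vb; apply: sub_hull; split; last exact: vertex_face.
by exists b; split=> //; apply: phi_true.
Qed.

End Relaxation.

Lemma rformula0_void : rformula 0 -> False.
Proof. by elim=> // -[]. Qed.

Theorem corollary4p5 (R : realType) (n : nat) (phi : rformula n)
  (Q : set 'rV[R]_n) :
  convexR Q -> Q `<=` @unit_cube R n -> @rdefset R n phi `<=` Q ->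
  riter phi n Q = conv_hull (@rdefset R n phi).
Proof.
move=> cQ Q_cube SQ; apply/seteqP; split; last first.
  by apply: hull_min; [exact: convexR_riter | exact: defset_riter].
case: n phi Q cQ Q_cube SQ => [phi|k phi Q cQ Q_cube _].
  by case: (rformula0_void phi).
have dim_all : face_dim (fun _ : 'I_k.+1 => None) = k.+1.
  by rewrite -[RHS]card_ord; apply: eq_card => i; rewrite !inE.
have Q_face : Q `<=` face (fun=> None) by move=> x Qx; split=> [|//]; apply: Q_cube.
by move=> x /(riter_face_hull dim_all cQ Q_face); apply: hull_mono => y [].
Qed.
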